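(* For every integer $n\ge 3$, $\mathrm{ex}(n,M_2,S_4)=n(n-3)/2$.
   Context: $M_2$ is the matching with two edges and $S_4$ is the star on $4$ vertices (a center with three leaves). For graphs $H,G$, $\mathcal{N}(H,G)$ is the number of subgraphs of $G$ isomorphic to $H$, and $\mathrm{ex}(n,H,F)$ is the maximum of $\mathcal{N}(H,G)$ over $F$-free graphs $G$ on $n$ vertices. *)

From mathcomp Require Import all_boot.
Set Implicit Arguments. Unset Strict Implicit. Unset Printing Implicit Defensive.

Definition simple_graph (V : finType) (e : rel V) : Prop :=
  (forall x y, e x y = e y x) /\ (forall x, e x x = false).

Definition edgeset (V : finType) (e : rel V) : {set {set V}} :=
  [set A : {set V} | [exists x, exists y, e x y && (A == [set x; y])]].

(* (S, F) is a subgraph of G = (V, e) isomorphic to H = ('I_k, eH):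
   F is a set of edges of G, each contained in S, and there is a bijection
   f : 'I_k -> S with  eH i j  <->  {f i, f j} \in F. *)
Definition is_copy (k : nat) (eH : rel 'I_k) (V : finType) (e : rel V)
    (p : {set V} * {set {set V}}) : bool :=
  let: (Sv, F) := p in
  [&& F \subset edgeset e,
      [forall A in F, A \subset Sv] &
      [exists f : {ffun 'I_k -> V},
         [&& injectiveb f, f @: setT == Sv &
             [forall i, forall j, eH i j == ([set f i; f j] \in F)]]]].

Definition numcopies (k : nat) (eH : rel 'I_k) (V : finType) (e : rel V) : nat :=
  #|[set p | is_copy eH e p]|.

Definition Hfree (k : nat) (eH : rel 'I_k) (V : finType) (e : rel V) : Prop :=
  numcopies eH e = 0.

(* ex(n, H, F) = m : m is the maximum of N(H,G) over F-free simple graphs G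
   on n vertices (vertex set 'I_n). *)
Definition ex_eq (n : nat) (kH : nat) (eH : rel 'I_kH) (kF : nat) (eF : rel 'I_kF)
    (m : nat) : Prop :=
  (exists e : rel 'I_n, [/\ simple_graph e, Hfree eF e & numcopies eH e = m]) /\
  (forall e : rel 'I_n, simple_graph e -> Hfree eF e -> numcopies eH e <= m).

Definition M2 : rel 'I_4 := fun i j =>
  [|| (val i == 0) && (val j == 1), (val i == 1) && (val j == 0),
      (val i == 2) && (val j == 3) | (val i == 3) && (val j == 2)].

Definition S4 : rel 'I_4 := fun i j =>
  ((val i == 0) && (val j != 0)) || ((val j == 0) && (val i != 0)).

From mathcomp Require Import all_boot zify.
Set Implicit Arguments. Unset Strict Implicit. Unset Printing Implicit Defensive.

(* A graph is S_4-free iff all its degrees are at most 2.  An edge xy is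
   disjoint from exactly m + 1 - d(x) - d(y) of the m edges, so counting
   ordered pairs of disjoint edges gives 2 N(M_2, G) = m (m + 1) - sum_v d(v)^2.
   When every degree is at most 2, d^2 >= d and d^2 >= 3d - 2 together with
   sum_v d(v) = 2m <= 2n bound this by n (n - 3), the value at m = n.  The
   n-cycle, which is 2-regular with n edges, attains the bound. *)

Section TwoElementSets.

Variable T : finType.
Implicit Types a b x y : T.

Lemma eq_set2 a b x y :
  [set a; b] = [set x; y] -> (a = x /\ b = y) \/ (a = y /\ b = x).
Proof.
move=> E; have := set21 a b; have := set22 a b; have := set21 x y; have := set22 x y.
rewrite -{1 2}E {3 4}E !inE.
by do 4 (case/orP => /eqP ?); subst; auto.
Qed.

Lemma eq_set2E a b x y :
  ([set a; b] == [set x; y]) = ((a == x) && (b == y)) || ((a == y) && (b == x)).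
Proof.
apply/eqP/idP => [/eq_set2 [[-> ->]|[-> ->]]|]; rewrite ?eqxx ?orbT //.
by case/orP => /andP [/eqP -> /eqP ->]; last exact: setUC.
Qed.

Lemma disjoint_set2 x y (B : {set T}) :
  [disjoint [set x; y] & B] = (x \notin B) && (y \notin B).
Proof. by rewrite disjoints_subset subUset !sub1set !inE. Qed.

End TwoElementSets.

Lemma eq_set2_inj (I T : finType) (f : I -> T) : injective f ->
  forall i j k l,
  ([set f i; f j] == [set f k; f l]) = ((i == k) && (j == l)) || ((i == l) && (j == k)).
Proof. by move=> f_inj i j k l; rewrite eq_set2E !(inj_eq f_inj). Qed.

Lemma mem_edgeset (V : finType) (e : rel V) x y :
  e x y -> [set x; y] \in edgeset e.
Proof.
by move=> exy; rewrite inE; apply/existsP; exists x; apply/existsP; exists y; rewrite exy eqxx.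
Qed.

Lemma edgesetP (V : finType) (e : rel V) A :
  A \in edgeset e -> exists x y, e x y /\ A = [set x; y].
Proof. by rewrite inE => /existsP [x /existsP [y /andP [exy /eqP ->]]]; exists x, y. Qed.

Definition incident_edges (V : finType) (e : rel V) (v : V) : {set {set V}} :=
  [set A in edgeset e | v \in A].

Definition deg (V : finType) (e : rel V) (v : V) : nat := #|incident_edges e v|.

Definition disjoint_edges (V : finType) (e : rel V) (A : {set V}) : {set {set V}} :=
  [set B in edgeset e | [disjoint A & B]].

Lemma in_incident_edges (V : finType) (e : rel V) v A :
  (A \in incident_edges e v) = (A \in edgeset e) && (v \in A).
Proof. by rewrite in_set. Qed.

Local Notation i4 k := (@Ordinal 4 k isT).

Section FourVertices.

Variables (V : finType) (a b c d : V).

Definition ffun4 : {ffun 'I_4 -> V} := [ffun i : 'I_4 => nth a [:: a; b; c; d] i].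

Lemma uniq4E :
  uniq [:: a; b; c; d] = [&& a != b, a != c, a != d, b != c & (b != d) && (c != d)].
Proof. by rewrite /= !inE !negb_or andbT -!andbA. Qed.

Lemma ffun4_inj : uniq [:: a; b; c; d] -> injective ffun4.
Proof.
by move=> abcd i j; rewrite !ffunE => /eqP; rewrite nth_uniq // => /eqP /val_inj.
Qed.

Lemma imset_ffun4 : ffun4 @: setT = [set a; b; c; d].
Proof.
apply/setP => x; rewrite !inE -!orbA; apply/imsetP/idP => [[i _ ->]|].
  by rewrite ffunE; case: i => [[|[|[|[|]]]] ?] //=; rewrite eqxx ?orbT.
by case/or4P => /eqP ->; [exists (i4 0) | exists (i4 1) | exists (i4 2) | exists (i4 3)];
  rewrite ?ffunE.
Qed.

Lemma ffun4_copy (eH : rel 'I_4) (e : rel V) (F : {set {set V}}) :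
  uniq [:: a; b; c; d] -> F \subset edgeset e ->
  (forall A, A \in F -> A \subset [set a; b; c; d]) ->
  (forall i j, eH i j = ([set ffun4 i; ffun4 j] \in F)) ->
  is_copy eH e ([set a; b; c; d], F).
Proof.
move=> abcd FE FS HF; apply/and3P; split => //; first exact/forall_inP.
apply/existsP; exists ffun4; rewrite imset_ffun4 eqxx.
apply/and3P; split => //; first exact/injectiveP/ffun4_inj.
by do 2 apply/forallP => ?; rewrite HF.
Qed.

End FourVertices.

Lemma is_copy_ffun4 (V : finType) (eH : rel 'I_4) (e : rel V) p : is_copy eH e p ->
  exists a b c d, [/\ uniq [:: a; b; c; d], p.1 = [set a; b; c; d],
    p.2 \subset edgeset e, (forall A, A \in p.2 -> A \subset p.1) &
    forall i j, eH i j = ([set ffun4 a b c d i; ffun4 a b c d j] \in p.2)].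
Proof.
case: p => S F /and3P [/= FE /forall_inP FS /existsP [f]].
case/and3P => /injectiveP f_inj /eqP fS HF.
have f_ffun4 : f = ffun4 (f (i4 0)) (f (i4 1)) (f (i4 2)) (f (i4 3)).
  apply/ffunP => i; rewrite ffunE.
  by case: i => [[|[|[|[|]]]] ?] //; congr (f _); apply: val_inj.
exists (f (i4 0)), (f (i4 1)), (f (i4 2)), (f (i4 3)); rewrite -f_ffun4; split => //.
- by change (uniq (map f [:: i4 0; i4 1; i4 2; i4 3])); rewrite map_inj_uniq.
- by rewrite /= -fS {1}f_ffun4 imset_ffun4.
- by move=> i j; apply/eqP; move/forallP/(_ i)/forallP/(_ j): HF.
Qed.

Lemma M2_copy (V : finType) (e : rel V) a b c d :
  uniq [:: a; b; c; d] -> e a b -> e c d ->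
  is_copy M2 e ([set a; b; c; d], [set [set a; b]; [set c; d]]).
Proof.
move=> abcd eab ecd; apply: ffun4_copy => //.
- by apply/subsetP => A /set2P [] ->; apply: mem_edgeset.
- by move=> A /set2P [] ->; apply/subsetP => x; rewrite !inE => /orP [] ->; rewrite ?orbT.
- have -> : [set [set a; b]; [set c; d]] =
      [set [set ffun4 a b c d (i4 0); ffun4 a b c d (i4 1)];
           [set ffun4 a b c d (i4 2); ffun4 a b c d (i4 3)]] by rewrite !ffunE.
  move=> i j; rewrite !inE !(eq_set2_inj (ffun4_inj abcd)).
  by case: i => [[|[|[|[|]]]] ?]; case: j => [[|[|[|[|]]]] ?].
Qed.

Lemma S4_copy (V : finType) (e : rel V) v a b c :
  uniq [:: v; a; b; c] -> e v a -> e v b -> e v c ->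
  is_copy S4 e ([set v; a; b; c], [set [set v; a]; [set v; b]; [set v; c]]).
Proof.
move=> vabc eva evb evc; apply: ffun4_copy => //.
- by apply/subsetP => A /setUP [/set2P [] | /set1P] ->; apply: mem_edgeset.
- move=> A /setUP [/set2P [] | /set1P] ->; apply/subsetP => x;
  by rewrite !inE => /orP [] ->; rewrite ?orbT.
- have -> : [set [set v; a]; [set v; b]; [set v; c]] =
      [set [set ffun4 v a b c (i4 0); ffun4 v a b c (i4 1)];
           [set ffun4 v a b c (i4 0); ffun4 v a b c (i4 2)];
           [set ffun4 v a b c (i4 0); ffun4 v a b c (i4 3)]] by rewrite !ffunE.
  move=> i j; rewrite !inE !(eq_set2_inj (ffun4_inj vabc)).
  by case: i => [[|[|[|[|]]]] ?]; case: j => [[|[|[|[|]]]] ?].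
Qed.

Section SimpleGraphs.

Variables (V : finType) (e : rel V).
Hypothesis e_simple : simple_graph e.

Lemma edge_neq x y : e x y -> x != y.
Proof. by case: e_simple => _ irr exy; apply: contraTneq exy => ->; rewrite irr. Qed.

Lemma edgeset_rel x y : [set x; y] \in edgeset e -> e x y.
Proof.
case: e_simple => sym _ /edgesetP [x' [y' [exy' /eq_set2 [[-> ->]|[-> ->]]]]] //.
by rewrite sym.
Qed.

Lemma card_edge A : A \in edgeset e -> #|A| = 2.
Proof. by case/edgesetP => x [y [exy ->]]; rewrite cards2 edge_neq. Qed.

Lemma incident_edgesP v A :
  A \in incident_edges e v -> exists u, e v u /\ A = [set v; u].
Proof.
case: e_simple => sym _; rewrite inE => /andP [/edgesetP [x [y [exy ->]]]].
by rewrite !inE => /orP [] /eqP ->; [exists y | exists x; rewrite sym setUC].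
Qed.

Lemma sum_deg : \sum_v deg e v = 2 * #|edgeset e|.
Proof.
rewrite (eq_bigr (fun v => \sum_(A in edgeset e | v \in A) 1)); last first.
  by move=> v _; rewrite sum1_card; apply: eq_card => A; rewrite inE.
rewrite (exchange_big_dep (mem (edgeset e))) /=; last by move=> v A _ /andP [].
rewrite mulnC -sum_nat_const.
by apply: eq_bigr => A EA; rewrite -(card_edge EA) sum1_card EA.
Qed.

Lemma sum_deg_edges :
  \sum_(A in edgeset e) \sum_(v in A) deg e v = \sum_v deg e v ^ 2.
Proof.
rewrite (exchange_big_dep predT) //=; apply: eq_bigr => v _.
by rewrite sum_nat_const; congr (_ * _); apply: eq_card => A; rewrite inE.
Qed.

Lemma incident_edgesI x y : e x y ->
  incident_edges e x :&: incident_edges e y = [set [set x; y]].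
Proof.
move=> exy; apply/setP => B; rewrite in_setI !in_incident_edges in_set1.
apply/idP/eqP => [|->]; last by rewrite mem_edgeset // !inE !eqxx orbT.
case/andP => /andP [/edgesetP [x' [y' [_ ->]]]] + /andP [_].
move: (edge_neq exy); rewrite !inE.
move=> nxy /orP [] /eqP ? /orP [] /eqP ?; subst => //.
all: by [rewrite eqxx in nxy | rewrite setUC].
Qed.

Lemma card_disjoint_edges A : A \in edgeset e ->
  #|disjoint_edges e A| + \sum_(v in A) deg e v = #|edgeset e| + 1.
Proof.
case/edgesetP => x [y [exy ->]].
rewrite big_setU1 ?big_set1 ?inE ?edge_neq //=.
have incident_sub : incident_edges e x :|: incident_edges e y \subset edgeset e.
  by apply/subsetP => B; rewrite in_setU !in_incident_edges => /orP [] /andP [].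
have -> : disjoint_edges e [set x; y] =
          edgeset e :\: (incident_edges e x :|: incident_edges e y).
  apply/setP => B; rewrite in_setD in_setU !in_incident_edges in_set disjoint_set2.
  by case: (B \in edgeset e); rewrite /= ?negb_or ?andbT.
rewrite cardsD (setIidPr incident_sub) /deg -cardsUI incident_edgesI // cards1.
by rewrite addnA subnK ?subset_leq_card.
Qed.

Lemma M2_copyP p : is_copy M2 e p ->
  exists a b c d, [/\ uniq [:: a; b; c; d], e a b, e c d &
    p = ([set a; b; c; d], [set [set a; b]; [set c; d]])].
Proof.
case/is_copy_ffun4 => a [b [c [d [abcd S_def FE FS HF]]]].
have f_inj := ffun4_inj abcd; set f := ffun4 a b c d in HF f_inj.
have [fa fb fc fd] : [/\ f (i4 0) = a, f (i4 1) = b, f (i4 2) = c & f (i4 3) = d].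
  by rewrite !ffunE.
have ab_in : [set a; b] \in p.2 by rewrite -fa -fb -HF.
have cd_in : [set c; d] \in p.2 by rewrite -fc -fd -HF.
exists a, b, c, d; split => //; [exact: edgeset_rel (subsetP FE _ ab_in) |
  exact: edgeset_rel (subsetP FE _ cd_in) |].
case: p S_def FE FS HF ab_in cd_in => S F /= -> FE FS HF ab_in cd_in; congr (_, _).
apply/setP => A; apply/idP/idP => [AF | /set2P [] -> //].
have [x [y [_ EA]]] := edgesetP (subsetP FE _ AF).
have /subsetP AS := FS _ AF.
have /imsetP [i _ Ex] : x \in f @: setT by rewrite imset_ffun4 AS // EA set21.
have /imsetP [j _ Ey] : y \in f @: setT by rewrite imset_ffun4 AS // EA set22.
have := HF i j; rewrite -Ex -Ey -EA AF; subst A x y; clear AF AS.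
rewrite -fa -fb -fc -fd !inE !(eq_set2_inj f_inj).
by case: i => [[|[|[|[|]]]] ?]; case: j => [[|[|[|[|]]]] ?].
Qed.

Lemma S4_copy_deg p : is_copy S4 e p -> exists v, 2 < deg e v.
Proof.
case/is_copy_ffun4 => v [a [b [c [vabc _ FE _ HF]]]].
have f_inj := ffun4_inj vabc; set f := ffun4 v a b c in HF f_inj.
have fv : f (i4 0) = v by rewrite ffunE.
have star_in u : S4 (i4 0) u -> [set v; f u] \in incident_edges e v.
  by move=> S4u; rewrite in_incident_edges set21 andbT -fv (subsetP FE) // -HF.
exists v; apply/card_gt2P; exists [set v; f (i4 1)], [set v; f (i4 2)], [set v; f (i4 3)].
by split; [split; apply: star_in | rewrite -fv !(eq_set2_inj f_inj)].
Qed.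

Lemma S4freeP : Hfree S4 e <-> (forall v, deg e v <= 2).
Proof.
rewrite /Hfree /numcopies; split => [free v | deg_le2]; last first.
  apply/eqP; rewrite cards_eq0; apply/eqP/setP => p; rewrite !inE.
  by apply/negbTE/negP => /S4_copy_deg [v]; rewrite ltnNge deg_le2.
rewrite leqNgt; apply/negP => /card_gt2P [A1 [A2 [A3 [[A1v A2v A3v]]]]].
have [u1 [evu1 ->]] := incident_edgesP A1v.
have [u2 [evu2 ->]] := incident_edgesP A2v.
have [u3 [evu3 ->]] := incident_edgesP A3v.
rewrite !eq_set2E !eqxx /= => [[/norP [n12 _] /norP [n23 _] /norP [n31 _]]].
have vu : uniq [:: v; u1; u2; u3] by rewrite uniq4E n12 n23 (eq_sym u1) n31 !edge_neq.
move/eqP: free; apply/negP; rewrite -lt0n card_gt0; apply/set0Pn.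
by eexists; rewrite inE; apply: S4_copy vu evu1 evu2 evu3.
Qed.

Let M2_copies := [set p | is_copy M2 e p].

Lemma card_M2_copies_at A : A \in edgeset e ->
  #|[set p in M2_copies | A \in p.2]| = #|disjoint_edges e A|.
Proof.
move=> EA; have [x [y [exy A_def]]] := edgesetP EA.
(* The copies through A are the (A :|: B, [set A; B]) with B an edge disjoint from A. *)
have pair_inj : {in disjoint_edges e A &, injective (fun B => (A :|: B, [set A; B]))}.
  move=> B B' + _ [_ /eq_set2 [[_ ->] | [_ BA]]] //.
  by rewrite in_set BA A_def disjoint_set2 set21 andbF.
rewrite -(card_in_imset pair_inj); apply: eq_card => p; rewrite inE.
apply/andP/imsetP => [[] | [B + ->]].
  rewrite inE => /M2_copyP [a [b [c [d [+ eab ecd ->]]]]].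
  rewrite uniq4E => /and5P [_ /negbTE ac /negbTE ad /negbTE bc /andP [/negbTE bd _]].
  move=> /= /set2P [] ->.
  - exists [set c; d]; last by rewrite setUA.
    by rewrite in_set mem_edgeset // disjoint_set2 !inE ac ad bc bd.
  - exists [set a; b]; last by congr (_, _); [rewrite [RHS]setUC setUA | apply: setUC].
    by rewrite in_set mem_edgeset // disjoint_set2 !inE !(eq_sym c) !(eq_sym d) ac ad bc bd.
rewrite in_set => /andP [/edgesetP [c [d [ecd ->]]] AB_disj].
split; last by rewrite /= set21.
move: AB_disj; rewrite A_def disjoint_set2 !inE !negb_or.
case/andP => /andP [xc xd] /andP [yc yd].
have xycd : uniq [:: x; y; c; d] by rewrite uniq4E xc xd yc yd !edge_neq.
by rewrite setUA; apply: M2_copy.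
Qed.

Lemma M2_copy_edges p : p \in M2_copies -> p.2 \subset edgeset e /\ #|p.2| = 2.
Proof.
rewrite inE => /M2_copyP [a [b [c [d [+ eab ecd ->]]]]] /=.
rewrite uniq4E cards2 eq_set2E => /and5P [_ /negbTE -> /negbTE -> _ _].
by split=> //; apply/subsetP => A /set2P [] ->; apply: mem_edgeset.
Qed.

Lemma sum_card_disjoint_edges :
  \sum_(A in edgeset e) #|disjoint_edges e A| = 2 * #|M2_copies|.
Proof.
transitivity (\sum_(A in edgeset e) \sum_(p in M2_copies | A \in p.2) 1).
  apply: eq_bigr => A EA; rewrite -card_M2_copies_at // sum1_card.
  by apply: eq_card => p; rewrite inE.
rewrite (exchange_big_dep (mem M2_copies)) /=; last by move=> A p _ /andP [].
rewrite mulnC -sum_nat_const; apply: eq_bigr => p pC.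
have [sub card2] := M2_copy_edges pC; rewrite -card2 sum1_card.
by apply: eq_card => A; rewrite unfold_in /= pC andbC; apply: andb_idr => /(subsetP sub).
Qed.

Lemma M2_double_count :
  2 * numcopies M2 e + \sum_v deg e v ^ 2 = #|edgeset e| * (#|edgeset e| + 1).
Proof.
rewrite -sum_card_disjoint_edges -sum_deg_edges -big_split -sum_nat_const /=.
by apply: eq_bigr => A EA; apply: card_disjoint_edges.
Qed.

End SimpleGraphs.

(* Here m = #|edgeset e| and s = \sum_v deg e v ^ 2; the second bound on s decides when
   2 m > n, the first one otherwise. *)
Lemma M2_count_bound_arith n m s : 3 <= n -> m <= n -> 2 * m <= s -> 6 * m <= s + 2 * n ->
  m * (m + 1) <= s + n * (n - 3).
Proof.
move=> n_ge3 m_le_n s_ge s_ge'.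
have [d n_def] : exists d, n = m + d by exists (n - m); lia.
case: (leqP (2 * m) n) => m_small; last first.
  suff : 5 * d <= (2 * m + d) * d by nia.
  by apply: leq_mul; lia.
case: (ltnP n 4) => [n_lt4 | n_ge4].
  suff : m <= 1 by nia.
  by lia.
suff : 2 <= d by nia.
by lia.
Qed.

Lemma S4free_numcopies_M2_le n (e : rel 'I_n) : 3 <= n -> simple_graph e -> Hfree S4 e ->
  numcopies M2 e <= n * (n - 3) %/ 2.
Proof.
move=> n_ge3 e_simple /(S4freeP e_simple) deg_le2.
have handshake := sum_deg e_simple.
have : \sum_v deg e v <= \sum_(v : 'I_n) 2 by apply: leq_sum => v _.
rewrite sum_nat_const card_ord handshake mulnC leq_pmul2r // => m_le_n.
have : \sum_v deg e v <= \sum_v deg e v ^ 2 by apply: leq_sum => v _; nia.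
rewrite handshake => sq_ge.
have : 3 * \sum_v deg e v <= \sum_v (deg e v ^ 2 + 2).
  rewrite big_distrr; apply: leq_sum => v _.
  by have := deg_le2 v; case: (deg e v) => [|[|[|]]].
rewrite big_split sum_nat_const card_ord handshake mulnA [n * 2]mulnC => sq_ge'.
have := M2_count_bound_arith n_ge3 m_le_n sq_ge sq_ge'.
by rewrite -(M2_double_count e_simple) addnC leq_add2l leq_divRL // mulnC.
Qed.

Lemma val_iter_ordS n (x : 'I_n) k : iter k (@ordS n) x = (x + k) %% n :> nat.
Proof.
elim: k => [|k IHk] /=; first by rewrite addn0 modn_small.
by rewrite IHk -addn1 modnDml addn1 addnS.
Qed.

Lemma iter_ordS_neq n (x : 'I_n) k : 0 < k < n -> iter k (@ordS n) x != x.
Proof.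
case/andP => k_gt0 k_lt_n; apply/eqP => /(congr1 (@nat_of_ord n)).
rewrite val_iter_ordS -[in RHS](modn_small (ltn_ord x)) -[in RHS](addn0 x) => /eqP.
by rewrite eqn_modDl mod0n modn_small // => /eqP k0; rewrite k0 in k_gt0.
Qed.

Definition cycle_graph n : rel 'I_n := fun x y => (y == ordS x) || (x == ordS y).
Arguments cycle_graph : clear implicits.

Lemma cycle_graph_simple n : 1 < n -> simple_graph (cycle_graph n).
Proof.
move=> n_gt1; split=> [x y | x]; first by rewrite /cycle_graph orbC.
by rewrite /cycle_graph orbb eq_sym (negbTE (@iter_ordS_neq n x 1 _)).
Qed.

Lemma deg_cycle_graph n (v : 'I_n) : 2 < n -> deg (cycle_graph n) v = 2.
Proof.
move=> n_gt2; rewrite /deg.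
have e_simple : simple_graph (cycle_graph n) by apply: cycle_graph_simple; lia.
have -> : incident_edges (cycle_graph n) v = [set [set v; ordS v]; [set v; ord_pred v]].
  apply/setP => A; apply/idP/set2P => [|[] ->].
  - case/(incident_edgesP e_simple) => u [/orP [] /eqP -> ->]; first by left.
    by right; rewrite ordSK.
  - by rewrite in_incident_edges set21 mem_edgeset // /cycle_graph eqxx.
  - by rewrite in_incident_edges set21 mem_edgeset // /cycle_graph ord_predK eqxx orbT.
have Sv : ordS v != v by apply: (@iter_ordS_neq n v 1); lia.
have SP : ordS v != ord_pred v.
  by have := @iter_ordS_neq n (ord_pred v) 2; rewrite /= ord_predK; apply; lia.
by rewrite cards2 eq_set2E eqxx (negbTE SP) (negbTE Sv) !andbF.
Qed.

Lemma numcopies_M2_cycle_graph n : 2 < n ->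
  numcopies M2 (cycle_graph n) = n * (n - 3) %/ 2.
Proof.
move=> n_gt2; have e_simple : simple_graph (cycle_graph n) by apply: cycle_graph_simple; lia.
have deg2 v : deg (cycle_graph n) v = 2 by apply: deg_cycle_graph.
have count := M2_double_count e_simple; have handshake := sum_deg e_simple.
rewrite (eq_bigr (fun _ => 2 ^ 2)) ?sum_nat_const ?card_ord in count;
  last by move=> v _; rewrite deg2.
rewrite (eq_bigr (fun _ => 2)) ?sum_nat_const ?card_ord in handshake;
  last by move=> v _; rewrite deg2.
have -> : n * (n - 3) = numcopies M2 (cycle_graph n) * 2 by nia.
by rewrite mulnK.
Qed.

Theorem mainTheorem19 (n : nat) : 3 <= n ->
  ex_eq n M2 S4 (n * (n - 3) %/ 2).
Proof.
move=> n_ge3; split=> [|e]; last exact: S4free_numcopies_M2_le.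
have cycle_simple : simple_graph (cycle_graph n) by apply: cycle_graph_simple; lia.
exists (cycle_graph n); split=> //; last exact: numcopies_M2_cycle_graph.
by apply/(S4freeP cycle_simple) => v; rewrite deg_cycle_graph.
Qed.
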